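(* For all integers $m\ge n\ge 2$, $$\gamma^{SLD}(K_n\times K_m)=\begin{cases} m+n-1, & n>2,\\ m, & n=2,\ m>2,\\ 4, & n=m=2.\end{cases}$$
   Context: $K_q$ is the complete graph on vertex set $\{1,\dots,q\}$. The direct product $G_1\times G_2$ has vertex set $V_1\times V_2$, with $(u_1,u_2)$ adjacent to $(v_1,v_2)$ iff $u_1v_1\in E_1$ and $u_2v_2\in E_2$. For a code (nonempty vertex subset) $C$ and vertex $v$, $I(C;v)=N[v]\cap C$, where $N[v]$ is the closed neighbourhood. A code $C$ in a graph $G$ is self-locating-dominating if for every non-codeword $u$, $I(C;u)\ne\emptyset$ and $\bigcap_{c\in I(C;u)}N[c]=\{u\}$. $\gamma^{SLD}(G)$ is the minimum size of a self-locating-dominating code in the finite graph $G$. *)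

From mathcomp Require Import all_boot.
Set Implicit Arguments. Unset Strict Implicit. Unset Printing Implicit Defensive.

(* A graph on a finite vertex type T is given by a symmetric irreflexive adjacency relation. *)

Definition closed_nbh (T : finType) (adj : rel T) (v : T) : {set T} :=
  [set u | (u == v) || adj v u].

Definition Iset (T : finType) (adj : rel T) (C : {set T}) (v : T) : {set T} :=
  closed_nbh adj v :&: C.

Definition self_loc_dom (T : finType) (adj : rel T) (C : {set T}) : bool :=
  (C != set0) &&
  [forall u, (u \notin C) ==>
     ((Iset adj C u != set0) &&
      ((\bigcap_(c in Iset adj C u) closed_nbh adj c) == [set u]))].

(* gamma^SLD : minimum size of a self-locating-dominating code
   (the whole vertex set is always such a code when T is nonempty) *)
Definition gamma_SLD (T : finType) (adj : rel T) : nat :=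
  \big[minn/#|T|]_(C : {set T} | self_loc_dom adj C) #|C|.

(* Complete graph K_q on vertex set 'I_q (standing for {1,...,q}) *)
Definition K_adj (q : nat) : rel 'I_q := fun i j => i != j.

Definition direct_prod (T1 T2 : finType) (adj1 : rel T1) (adj2 : rel T2) : rel (T1 * T2) :=
  fun x y => adj1 x.1 y.1 && adj2 x.2 y.2.

From mathcomp Require Import all_boot order zify.
Set Implicit Arguments. Unset Strict Implicit. Unset Printing Implicit Defensive.
Import Order.TTheory.

(* Two vertices of K_n x K_m are adjacent iff they differ in both coordinates.
   Locating a non-codeword (a, b) against the vertices (i, b) of its column
   forces every row i <> a to contain a codeword outside column b, and
   symmetrically for columns. Hence an empty row forces all other rows to be
   full, and a row whose only codeword is (i, j) forces column j to be full;
   counting codewords by rows and by columns then gives |C| >= n + m - 1 when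
   n, m >= 3 and |C| >= m when n = 2. A row plus a column, respectively a single
   row, attain these bounds. In K_2 x K_2 every vertex has a single neighbour,
   which cannot separate it from itself, so only the whole vertex set works. *)

Lemma exists_neq (T : finType) (x : T) : 1 < #|T| -> exists y, y != x.
Proof.
move=> T2; have /card_gt0P[y] : 0 < #|[set~ x]| by rewrite cardsC1 -subn1; lia.
by rewrite !inE => yx; exists y.
Qed.

Lemma exists_neq2 (T : finType) (x y : T) : 2 < #|T| -> exists z, (z != x) && (z != y).
Proof.
move=> T3; have /card_gt0P[z] : 0 < #|[set~ x] :\ y|.
  by have := cardsD1 y [set~ x]; rewrite cardsC1 -subn1; lia.
by rewrite !inE andbC => zxy; exists z.
Qed.

Lemma card2_neq_eq (T : finType) (z x y : T) : #|T| = 2 -> x != z -> y != z -> x = y.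
Proof.
move=> T2 xz yz; have /cards1P[w Cz] : #|[set~ z]| == 1 by rewrite cardsC1 T2.
have /[!inE] /eqP-> : x \in [set w] by rewrite -Cz !inE.
by have /[!inE] /eqP-> : y \in [set w] by rewrite -Cz !inE.
Qed.

Lemma gamma_SLD_eq (T : finType) (adj : rel T) (C0 : {set T}) :
  self_loc_dom adj C0 -> (forall C, self_loc_dom adj C -> #|C0| <= #|C|) ->
  gamma_SLD adj = #|C0|.
Proof.
move=> sldC0 minC0; apply/eqP; rewrite /gamma_SLD -minEnat eq_le.
rewrite (bigmin_le_cond _ _ sldC0) /=; apply/bigmin_geP; split=> //.
exact: max_card.
Qed.

Lemma self_loc_domP (T : finType) (adj : rel T) (C : {set T}) :
  symmetric adj -> 1 < #|T| ->
  self_loc_dom adj C <->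
  forall u v, u \notin C -> v != u ->
    exists2 c, c \in Iset adj C u & v \notin closed_nbh adj c.
Proof.
move=> adj_sym T2; split.
  case/andP=> _ /forallP sldC u v uC vu.
  have /andP[_ /eqP capE] := implyP (sldC u) uC.
  pose sep_c := [pred c | (c \in Iset adj C u) && (v \notin closed_nbh adj c)].
  have [c /andP[cI vc]|noc] := pickP sep_c; first by exists c.
  suff : v \in \bigcap_(c in Iset adj C u) closed_nbh adj c by rewrite capE inE (negbTE vu).
  by apply/bigcapP => c cI; move: (noc c); rewrite /= cI => /negbFE.
move=> sep; have Inbh u : u \notin C -> Iset adj C u != set0.
  move=> uC; have [v vu] := exists_neq u T2.
  by have [c cI _] := sep u v uC vu; apply/set0Pn; exists c.
apply/andP; split.
  have /card_gt0P[u _] := ltnW T2.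
  case: (boolP (u \in C)) => [uC|/Inbh]; first by apply/set0Pn; exists u.
  by apply: contraNneq => ->; rewrite /Iset setI0.
apply/forallP => u; apply/implyP => uC; rewrite Inbh //= eqEsubset sub1set.
apply/andP; split.
  apply/subsetP => v vcap; rewrite inE; apply: contraT => vu.
  have [c cI vc] := sep u v uC vu.
  by move/bigcapP: vcap => /(_ c cI); rewrite (negbTE vc).
apply/bigcapP => c; rewrite !inE => /andP[/orP[/eqP->|uc] _].
  by rewrite eqxx.
by rewrite adj_sym uc orbT.
Qed.

Definition complete_adj (T : finType) : rel T := fun x y => x != y.

Local Notation Kprod I J := (direct_prod (@complete_adj I) (@complete_adj J)).

Section CompleteGraphProduct.

Variables I J : finType.

(* [c] is a codeword neighbour of [u] whose closed neighbourhood misses [v]. *)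
Definition separates (C : {set I * J}) (u v : I * J) : Prop :=
  exists c, [/\ c \in C, c.1 != u.1, c.2 != u.2, c != v & (c.1 == v.1) || (c.2 == v.2)].

Lemma sld_prodP (C : {set I * J}) : 1 < #|{: I * J}| ->
  self_loc_dom (Kprod I J) C <-> forall u v, u \notin C -> v != u -> separates C u v.
Proof.
move=> IJ2; have adj_sym : symmetric (Kprod I J).
  by move=> x y; rewrite /direct_prod /complete_adj eq_sym [x.2 == _]eq_sym.
rewrite self_loc_domP // /separates; split=> sep u v uC vu; have := sep u v uC vu.
  case=> c; rewrite !inE /direct_prod /complete_adj.
  case/andP=> /orP[/eqP cu|/andP[uc1 uc2]] cC; first by rewrite -cu cC in uC.
  rewrite negb_or negb_and !negbK => /andP[vc cv].
  by exists c; split; rewrite // eq_sym.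
case=> c [cC cu1 cu2 cv cvs]; exists c.
  by rewrite !inE /direct_prod /complete_adj (eq_sym u.1) (eq_sym u.2) cu1 cu2 cC orbT.
by rewrite !inE /direct_prod /complete_adj negb_or negb_and !negbK (eq_sym v) cv cvs.
Qed.

Definition row_of (C : {set I * J}) (i : I) : {set J} := [set j | (i, j) \in C].

Definition swap_set (C : {set I * J}) : {set J * I} := [set x | (x.2, x.1) \in C].

Lemma card_code_rows (C : {set I * J}) : #|C| = \sum_i #|row_of C i|.
Proof.
rewrite -sum1_card big_mkcond.
under [RHS]eq_bigr => i _ do rewrite -sum1_card big_mkcond.
by rewrite pair_big; apply: eq_bigr => -[i j] _; rewrite inE.
Qed.

Lemma card_code_ge_rows (C : {set I * J}) i0 k0 k :
  k0 <= #|row_of C i0| -> (forall i, i != i0 -> k <= #|row_of C i|) ->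
  k0 + (#|I| - 1) * k <= #|C|.
Proof.
move=> rowi0 rows; rewrite card_code_rows (bigD1 i0) //= leq_add //.
rewrite subn1 -(cardC1 i0) -sum_nat_const; exact: leq_sum.
Qed.

Lemma card_code_ge_all_rows (C : {set I * J}) k :
  (forall i, k <= #|row_of C i|) -> #|I| * k <= #|C|.
Proof. by move=> rows; rewrite card_code_rows -sum_nat_const; apply: leq_sum. Qed.

Lemma card_swap_set (C : {set I * J}) : #|swap_set C| = #|C|.
Proof.
have -> : swap_set C = [set (x.2, x.1) | x in C].
  apply/setP => -[j i]; rewrite inE /=; apply/idP/imsetP => [ijC|[[i' j'] ? [-> ->]]] //.
  by exists (i, j).
by apply: card_imset => -[i j] [i' j'] /= [-> ->].
Qed.

Lemma sld_row_cover (C : {set I * J}) a b i :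
  self_loc_dom (Kprod I J) C -> (a, b) \notin C -> i != a -> exists2 j, j != b & (i, j) \in C.
Proof.
move=> sldC abC ia; have vu : (i, b) != (a, b) by rewrite xpair_eqE negb_and ia.
have IJ2 : 1 < #|{: I * J}| by apply/card_gt1P; exists (i, b), (a, b).
have [[c1 c2] [cC _ c2b _ /=]] := (sld_prodP C IJ2).1 sldC _ _ abC vu.
by rewrite (negbTE c2b) orbF => /eqP c1i; exists c2; rewrite // -c1i.
Qed.

Lemma sld_row_empty (C : {set I * J}) i i' :
  self_loc_dom (Kprod I J) C -> row_of C i = set0 -> i' != i -> row_of C i' = setT.
Proof.
move=> sldC rowi i'i; apply/setP => b; rewrite !inE; apply: contraT => i'bC.
have [|j _ ijC] := sld_row_cover (i := i) sldC i'bC; first by rewrite eq_sym.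
have : j \in row_of C i by rewrite inE.
by rewrite rowi inE.
Qed.

Lemma sld_row_single (C : {set I * J}) i j :
  self_loc_dom (Kprod I J) C -> row_of C i = [set j] -> forall i', (i', j) \in C.
Proof.
move=> sldC rowi i'; have : j \in row_of C i by rewrite rowi set11.
rewrite inE; case: (eqVneq i' i) => [-> //|i'i] ijC; apply: contraT => i'jC.
have [|j' j'j ij'C] := sld_row_cover (i := i) sldC i'jC; first by rewrite eq_sym.
have : j' \in row_of C i by rewrite inE.
by rewrite rowi inE (negbTE j'j).
Qed.

Lemma sld_card_ge_row_empty (C : {set I * J}) i :
  self_loc_dom (Kprod I J) C -> row_of C i = set0 -> (#|I| - 1) * #|J| <= #|C|.
Proof.
move=> sldC rowi; rewrite -[_ * _]add0n; apply: (card_code_ge_rows (i0 := i)) => // i' i'i.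
by rewrite (sld_row_empty sldC rowi i'i) cardsT.
Qed.

Lemma sld_2x2 (C : {set I * J}) : #|I| = 2 -> #|J| = 2 -> self_loc_dom (Kprod I J) C -> C = setT.
Proof.
move=> I2 J2 sldC; apply/setP => -[a b]; rewrite inE; apply: contraT => abC.
have IJ2 : 1 < #|{: I * J}| by rewrite card_prod I2 J2.
have [a' a'a] := exists_neq a (eq_leq (esym I2)).
have [b' b'b] := exists_neq b (eq_leq (esym J2)).
have vu : (a', b') != (a, b) by rewrite xpair_eqE negb_and a'a.
have [[c1 c2] [_ /= c1a c2b cv _]] := (sld_prodP C IJ2).1 sldC _ _ abC vu.
by rewrite (card2_neq_eq I2 c1a a'a) (card2_neq_eq J2 c2b b'b) eqxx in cv.
Qed.

Definition row_code (z1 : I) : {set I * J} := setX [set z1] setT.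

Definition cross_code (z1 : I) (z2 : J) : {set I * J} := row_code z1 :|: setX setT [set z2].

Lemma row_code_separates (C : {set I * J}) z1 u v :
  2 < #|J| -> row_code z1 \subset C -> u.1 != z1 -> v != u ->
  (v.1 == z1) || (v.2 != u.2) -> separates C u v.
Proof.
move=> J3 /subsetP rowC; case: u v => a b [x y] /= az vu.
have z1C j : (z1, j) \in C by apply/rowC; rewrite /row_code !inE /= eqxx.
case: (eqVneq x z1) => [-> _ | xz /= yb].
  have [j /andP[jb jy]] := exists_neq2 b y J3.
  exists (z1, j); split=> //=; first by rewrite eq_sym.
    by rewrite xpair_eqE negb_and jy orbT.
  by rewrite eqxx.
exists (z1, y); split=> //=; first by rewrite eq_sym.
  by rewrite xpair_eqE negb_and eq_sym xz.
by rewrite eqxx orbT.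
Qed.

Lemma sld_cross_code z1 z2 : 2 < #|J| -> self_loc_dom (Kprod I J) (cross_code z1 z2).
Proof.
move=> J3; have I1 : 0 < #|I| by apply/card_gt0P; exists z1.
apply/sld_prodP; first by rewrite card_prod; nia.
move=> [a b] [x y]; rewrite !inE /= andbT => /norP[az bz] vu.
case: (boolP ((x == z1) || (y != b))) => [sep|].
  by apply: (row_code_separates (z1 := z1)) => //; apply: subsetUl.
rewrite negb_or negbK => /andP[xz /eqP yb]; subst y.
have xa : x != a by move: vu; rewrite xpair_eqE eqxx andbT.
exists (x, z2); split=> //=; last by rewrite eqxx.
- by rewrite /cross_code !inE /= eqxx orbT.
- by rewrite eq_sym.
by rewrite xpair_eqE negb_and eq_sym bz orbT.
Qed.

Lemma sld_row_code z1 : #|I| = 2 -> 2 < #|J| -> self_loc_dom (Kprod I J) (row_code z1).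
Proof.
move=> I2 J3; apply/sld_prodP; first by rewrite card_prod I2; lia.
move=> [a b] [x y]; rewrite !inE /= andbT => az vu.
apply: row_code_separates => //=; case: (eqVneq x z1) => //= xz.
by move: vu; rewrite (card2_neq_eq I2 xz az) xpair_eqE eqxx.
Qed.

Lemma card_row_code z1 : #|row_code z1| = #|J|.
Proof. by rewrite cardsX cards1 cardsT mul1n. Qed.

Lemma card_cross_code z1 z2 : #|cross_code z1 z2| = #|I| + #|J| - 1.
Proof.
rewrite cardsU; have -> : row_code z1 :&: setX setT [set z2] = [set (z1, z2)].
  by apply/setP => -[i j]; rewrite !inE andbT.
by rewrite !cardsX !cards1 !cardsT; lia.
Qed.

End CompleteGraphProduct.

Lemma sld_swap (I J : finType) (C : {set I * J}) : 1 < #|{: I * J}| ->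
  self_loc_dom (Kprod I J) C -> self_loc_dom (Kprod J I) (swap_set C).
Proof.
move=> IJ2 /(sld_prodP C IJ2) sep; apply/sld_prodP; first by rewrite card_prod mulnC -card_prod.
move=> [b a] [y x]; rewrite inE /= => abC vu.
have [[c1 c2] [cC /= c1a c2b cv cvs]] : separates C (a, b) (x, y).
  by apply: sep => //; move: vu; rewrite !xpair_eqE andbC.
exists (c2, c1); split; rewrite ?inE 1?orbC //.
by move: cv; rewrite !xpair_eqE andbC.
Qed.

Lemma sld_card_ge_row_single (I J : finType) (C : {set I * J}) i j :
  self_loc_dom (Kprod I J) C -> row_of C i = [set j] ->
  (forall j', row_of (swap_set C) j' != set0) -> #|I| + (#|J| - 1) <= #|C|.
Proof.
move=> sldC rowi colsN; rewrite -card_swap_set -[#|J| - 1]muln1.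
apply: (card_code_ge_rows (i0 := j)) => [|j' _]; last by rewrite card_gt0.
rewrite (_ : row_of _ j = setT) ?cardsT //; apply/setP => i'; rewrite !inE.
exact: sld_row_single sldC rowi i'.
Qed.

Lemma sld_card_ge_cross (I J : finType) (C : {set I * J}) :
  2 < #|I| -> 2 < #|J| -> self_loc_dom (Kprod I J) C -> #|I| + #|J| - 1 <= #|C|.
Proof.
move=> I3 J3 sldC; have sldCT : self_loc_dom (Kprod J I) (swap_set C).
  by apply: sld_swap => //; rewrite card_prod; nia.
have cardCT := card_swap_set C.
case: (pickP (fun i => row_of C i == set0)) => [i /eqP | rowsN].
  by move/(sld_card_ge_row_empty sldC); nia.
case: (pickP (fun j => row_of (swap_set C) j == set0)) => [j /eqP | colsN].
  by move/(sld_card_ge_row_empty sldCT); nia.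
case: (pickP (fun i => #|row_of C i| == 1)) => [i /cards1P[j rowi] | rows1].
  by have := sld_card_ge_row_single sldC rowi (fun j => negbT (colsN j)); lia.
case: (pickP (fun j => #|row_of (swap_set C) j| == 1)) => [j /cards1P[i colj] | cols1].
  have rowsN' i' : row_of (swap_set (swap_set C)) i' != set0.
    by rewrite (_ : row_of _ i' = row_of C i') ?rowsN //; apply/setP => j'; rewrite !inE.
  by have := sld_card_ge_row_single sldCT colj rowsN'; lia.
have rows2 i : 2 <= #|row_of C i|.
  by move: (rowsN i) (rows1 i); rewrite /= -cards_eq0; case: #|_| => [|[]].
have cols2 j : 2 <= #|row_of (swap_set C) j|.
  by move: (colsN j) (cols1 j); rewrite /= -cards_eq0; case: #|_| => [|[]].
have := card_code_ge_all_rows rows2; have := card_code_ge_all_rows cols2; lia.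
Qed.

Lemma sld_card_ge_two_rows (I J : finType) (C : {set I * J}) :
  #|I| = 2 -> 1 < #|J| -> self_loc_dom (Kprod I J) C -> #|J| <= #|C|.
Proof.
move=> I2 J2 sldC; have sldCT : self_loc_dom (Kprod J I) (swap_set C).
  by apply: sld_swap => //; rewrite card_prod I2; lia.
rewrite -card_swap_set; case: (pickP (fun j => row_of (swap_set C) j == set0)) => [j /eqP | colsN].
  by move/(sld_card_ge_row_empty sldCT); rewrite I2; lia.
by rewrite -[#|J|]muln1; apply: card_code_ge_all_rows => j; rewrite card_gt0 colsN.
Qed.

Lemma gamma_SLD_cross (I J : finType) :
  2 < #|I| -> 2 < #|J| -> gamma_SLD (Kprod I J) = #|I| + #|J| - 1.
Proof.
move=> I3 J3; have /card_gt0P[z1 _] : 0 < #|I| by lia.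
have /card_gt0P[z2 _] : 0 < #|J| by lia.
rewrite -(card_cross_code z1 z2); apply: gamma_SLD_eq => [|C].
  exact: sld_cross_code.
by rewrite card_cross_code; apply: sld_card_ge_cross.
Qed.

Lemma gamma_SLD_two_rows (I J : finType) :
  #|I| = 2 -> 2 < #|J| -> gamma_SLD (Kprod I J) = #|J|.
Proof.
move=> I2 J3; have /card_gt0P[z1 _] : 0 < #|I| by lia.
rewrite -(card_row_code J z1); apply: gamma_SLD_eq => [|C].
  exact: sld_row_code.
by rewrite card_row_code; apply: sld_card_ge_two_rows; lia.
Qed.

Lemma gamma_SLD_2x2 (I J : finType) :
  #|I| = 2 -> #|J| = 2 -> gamma_SLD (Kprod I J) = 4.
Proof.
move=> I2 J2; have -> : 4 = #|[set: I * J]| by rewrite cardsT card_prod I2 J2.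
apply: gamma_SLD_eq => [|C /(sld_2x2 I2 J2) -> //].
by apply/sld_prodP => [|u v]; rewrite ?card_prod ?I2 ?J2 // inE.
Qed.

Theorem theorem19 (n m : nat) : 2 <= n -> n <= m ->
  gamma_SLD (direct_prod (@K_adj n) (@K_adj m)) =
  (if 2 < n then m + n - 1 else if 2 < m then m else 4).
Proof.
move=> n2 nm; rewrite -[direct_prod _ _]/(Kprod 'I_n 'I_m).
case: (ltnP 2 n) => [n3 | n_le2].
  by rewrite gamma_SLD_cross !card_ord 1?addnC //; lia.
have n_eq2 : #|'I_n| = 2 by rewrite card_ord; lia.
case: (ltnP 2 m) => [m3 | m_le2].
  by rewrite gamma_SLD_two_rows // card_ord.
by rewrite gamma_SLD_2x2 // card_ord; lia.
Qed.
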